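(* Let $A$ and $Z$ be $n\times n$ complex matrices with $A$ positive semidefinite and $Z$ positive definite with largest eigenvalue $a$ and smallest eigenvalue $b$. Then $${\rm Sing}(AZ) \prec_w \frac{a+b}{2\sqrt{ab}}\,{\rm Eig}(AZ),$$ i.e. for each $k=1,\dots,n$, the sum of the $k$ largest singular values of $AZ$ is at most $\frac{a+b}{2\sqrt{ab}}$ times the sum of the $k$ largest eigenvalues of $AZ$.
   Context: ${\rm Sing}(X)$ is the sequence of singular values of $X$ in decreasing order counted with multiplicity; ${\rm Eig}(X)$, for $X$ with only real eigenvalues (as is $AZ$ here), is the sequence of its eigenvalues in decreasing order counted with multiplicity. For real sequences $\{a_j\}_{j=1}^n,\{b_j\}_{j=1}^n$ arranged in decreasing order, $\{a_j\}\prec_w\{b_j\}$ means $\sum_{j=1}^k a_j\le\sum_{j=1}^k b_j$ for $k=1,\dots,n$. *)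

From HB Require Import structures.
From mathcomp Require Import all_boot all_order all_algebra.
From mathcomp Require Import complex.
Set Implicit Arguments. Unset Strict Implicit. Unset Printing Implicit Defensive.
Import Order.TTheory GRing.Theory Num.Theory.
Local Open Scope ring_scope.
Local Open Scope complex_scope.

(* Complex numbers are modelled as R[i] = complex R for a real closed field R
   (for R the real numbers this is C). *)

Definition adjmx (R : rcfType) m n (M : 'M[R[i]]_(m, n)) : 'M[R[i]]_(n, m) :=
  (map_mx Num.conj M)^T.

Definition psdmx (R : rcfType) n (A : 'M[R[i]]_n) : Prop :=
  adjmx A = A /\ forall v : 'rV[R[i]]_n, 0 <= (v *m A *m adjmx v) 0 0.

Definition pdmx (R : rcfType) n (A : 'M[R[i]]_n) : Prop :=
  adjmx A = A /\ forall v : 'rV[R[i]]_n, v != 0 -> 0 < (v *m A *m adjmx v) 0 0.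

(* s = Eig(M): the (necessarily real) eigenvalues of M, counted with
   multiplicity (as roots of the characteristic polynomial), in decreasing order *)
Definition is_Eig (R : rcfType) n (M : 'M[R[i]]_n) (s : seq R) : Prop :=
  sorted (>=%R) s /\ char_poly M = \prod_(x <- s) ('X - (x%:C)%:P).

(* s = Sing(M): the singular values of M (nonnegative square roots of the
   eigenvalues of M^* M), counted with multiplicity, in decreasing order *)
Definition is_Sing (R : rcfType) n (M : 'M[R[i]]_n) (s : seq R) : Prop :=
  sorted (>=%R) s /\ all (fun x => 0 <= x) s /\
  char_poly (adjmx M *m M) = \prod_(x <- s) ('X - ((x ^+ 2)%:C)%:P).

From HB Require Import structures.
From mathcomp Require Import all_boot all_order all_algebra.
From mathcomp Require Import perm complex ring lra.
Set Implicit Arguments. Unset Strict Implicit. Unset Printing Implicit Defensive.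
Import Order.TTheory GRing.Theory Num.Theory.

(* Let S be the positive square root of Z and P := S A S, which is positive
   semidefinite; since A Z = S^-1 P S, the eigenvalues of A Z are those of P.
   With unit right singular vectors x_i of A Z and u_i := x_i (A Z)^* / sig_i,
   sig_i = <u_i S^-1 P S, x_i>.  Abel summation over the spectral decomposition
   of P turns the sum of the k largest sig_i into
   sum_m (lam_m - lam_(m+1)) Re T_m, where T_m is the same sum with P replaced
   by the projection Q_m onto its top m+1 eigenvectors.  With
   c = (a + b) / (2 sqrt(a b)), |T_m| <= c k term by term, because Wielandt's
   inequality gives |y S^-1 Q_m S| <= c |y|, and |T_m| <= c (m + 1) after
   exchanging the sums, by Bessel's inequality and the Kantorovich inequality
   |p S| |p S^-1| <= c for unit p.  Abel summation of the lam_i ends the proof. *)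

Local Open Scope ring_scope.
Local Open Scope sesquilinear_scope.

Local Notation "''[' u , v ]" := (dotmx u v) : ring_scope.
Local Notation "''[' u ]" := (dotmx u u) : ring_scope.

Section DotProduct.
Variable C : numClosedFieldType.

Lemma trmxC_mul m n p (A : 'M[C]_(m, n)) (B : 'M[C]_(n, p)) :
  (A *m B)^t* = B^t* *m A^t*.
Proof. by rewrite trmx_mul map_mxM. Qed.

Lemma dotmx_mulmxl n (M : 'M[C]_n) (u v : 'rV[C]_n) :
  '[u *m M, v] = '[u, v *m M^t*].
Proof. by rewrite !dotmxE trmxC_mul trmxCK mulmxA. Qed.

Lemma dotmx_CauchySchwarz n (u v : 'rV[C]_n) : `|'[u, v]| ^+ 2 <= '[u] * '[v].
Proof. exact: CauchySchwarz. Qed.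

Lemma mulmx_rV_trC n p (u v : 'rV[C]_n) (w : 'M[C]_(1, p)) :
  u *m v^t* *m w = '[u, v] *: w.
Proof. by rewrite dotmxE -mul_scalar_mx -mx11_scalar. Qed.

Lemma dnorm_sum_orthonormal n (I : finType) (P : pred I) (x : I -> 'rV[C]_n)
    (c : I -> C) :
  (forall i j, '[x i, x j] = (i == j)%:R) ->
  '[\sum_(i | P i) c i *: x i] = \sum_(i | P i) `|c i| ^+ 2.
Proof.
move=> xo; rewrite linear_sumlz; apply: eq_bigr => i Pi.
rewrite linearZl_LR linear_sumr (bigD1 i) //= big1 ?addr0 => [|j /andP[_ ji]].
  by rewrite linearZr_LR /= xo eqxx mulr1 normCK mulrC.
by rewrite linearZr_LR /= xo eq_sym (negbTE ji) mulr0.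
Qed.

Lemma Bessel n (I : finType) (P : pred I) (u : I -> 'rV[C]_n) (h : 'rV[C]_n) :
  (forall i j, P i -> P j -> i != j -> '[u i, u j] = 0) ->
  (forall i, P i -> '[u i] <= 1) ->
  \sum_(i | P i) `|'[h, u i]| ^+ 2 <= '[h].
Proof.
move=> uo u1; set G := \sum_(i | P i) _.
set s := \sum_(i | P i) '[h, u i] *: u i.
have hs : '[h, s] = G.
  rewrite linear_sumr; apply: eq_bigr => i _.
  by rewrite linearZr_LR /= normCK mulrC.
have sh : '[s, h] = G.
  rewrite linear_sumlz; apply: eq_bigr => i _.
  by rewrite linearZl_LR /= [X in _ * X]hermC /= expr0 mul1r normCK.
have ss : '[s] <= G.
  rewrite linear_sumlz; apply: ler_sum => i Pi.
  rewrite linearZl_LR linear_sumr (bigD1 i) //= big1 ?addr0; last first.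
    by move=> j /andP[Pj ji]; rewrite linearZr_LR /= uo ?mulr0 // eq_sym.
  rewrite linearZr_LR /= mulrA -normCK ler_piMr ?u1 //.
  by rewrite exprn_ge0.
have := dnorm_ge0 (dotmx (n:=n)) (h - s).
rewrite linearBl linearBr linearBr /= hs sh => hs_ge0.
by rewrite -subr_ge0; apply: le_trans hs_ge0 _; rewrite lerBlDr lerDl subr_ge0.
Qed.

End DotProduct.

Lemma char_poly_similar (K : comNzRingType) n (S Si P : 'M[K]_n) :
  Si *m S = 1%:M -> char_poly (Si *m P *m S) = char_poly P.
Proof.
move=> SiS; rewrite /char_poly /char_poly_mx.
have -> : 'X%:M - map_mx polyC (Si *m P *m S) =
   map_mx polyC Si *m ('X%:M - map_mx polyC P) *m map_mx polyC S.
  rewrite mulmxBr mulmxBl !map_mxM; congr (_ - _).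
  by rewrite mul_mx_scalar -scalemxAl -map_mxM SiS map_mx1 scalemx1.
rewrite !det_mulmx mulrC mulrA -det_mulmx -map_mxM.
by rewrite (mulmx1C SiS) map_mx1 det1 mul1r.
Qed.

Section Telescope.
Variable K : pzRingType.

Lemma telescope_gaps (f : nat -> K) n j : f n = 0 -> (j < n)%N ->
  f j = \sum_(m < n) (f m - f m.+1) * ((j <= m)%N)%:R.
Proof.
move=> fn0 jn; pose g m := f (maxn m j).
rewrite (eq_bigr (fun m : 'I_n => - (g m.+1 - g m))) => [|m _]; last first.
  rewrite opprB /g; case: (leqP j m) => jm.
    by rewrite mulr1 (maxn_idPl (leqW jm)).
  by rewrite mulr0 (maxn_idPr jm) subrr.
rewrite sumrN -(big_mkord xpredT (fun m => g m.+1 - g m)) telescope_sumr //.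
by rewrite opprB /g max0n (maxn_idPl (ltnW jn)) fn0 subr0.
Qed.

Lemma sum_prefix_gaps (f : nat -> K) n k : f n = 0 -> (k <= n)%N ->
  \sum_(i < k) f i = \sum_(m < n) (f m - f m.+1) * (minn m.+1 k)%:R.
Proof.
move=> fn0 kn.
under eq_bigr => i _ do rewrite (telescope_gaps fn0 (leq_trans (ltn_ord i) kn)).
rewrite exchange_big /=; apply: eq_bigr => m _; rewrite -mulr_sumr -natr_sum.
congr (_ * _%:R); rewrite -[RHS](card_ord (minn m.+1 k)) -sum1_card.
rewrite (big_ord_widen k (fun=> 1%N)) ?geq_minr // [RHS]big_mkcond /=.
by apply: eq_bigr => i _; rewrite leq_min ltnS ltn_ord andbT; case: leqP.
Qed.

End Telescope.

(* Both definitions below are locked: unifying two of these matrices with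
   different weights would otherwise unfold [sqrtC] on [R[i]], which takes
   minutes. *)
Fact diag_in_key : unit. Proof. by []. Qed.

Section DiagIn.
Variables (C : numClosedFieldType) (n : nat) (U : 'M[C]_n).

(* Matrices act on row vectors from the right: when [U] is unitary, the rows
   of [U] are eigenvectors of [diag_in w], with eigenvalues [w]. *)
Definition diag_in (w : 'I_n -> C) : 'M[C]_n :=
  locked_with diag_in_key (U^t* *m diag_mx (\row_l w l) *m U).

Lemma diag_in_def w : diag_in w = U^t* *m diag_mx (\row_l w l) *m U.
Proof. exact: locked_withE. Qed.

Definition sqrt_diag_in (w : 'I_n -> C) : 'M[C]_n :=
  locked_with diag_in_key (diag_in (fun l => sqrtC (w l))).

Lemma sqrt_diag_in_def w : sqrt_diag_in w = diag_in (fun l => sqrtC (w l)).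
Proof. exact: locked_withE. Qed.

Lemma diag_inE w : diag_in w = \sum_l w l *: ((row l U)^t* *m row l U).
Proof.
apply/matrixP => i j; rewrite diag_in_def mul_mx_diag !mxE summxE.
by apply: eq_bigr => l _; rewrite !mxE big_ord1 !mxE [RHS]mulrCA mulrA.
Qed.

Lemma eq_diag_in w w' : w =1 w' -> diag_in w = diag_in w'.
Proof.
move=> ww'; rewrite !diag_in_def; congr (_ *m diag_mx _ *m _).
by apply/rowP => l; rewrite !mxE.
Qed.

Lemma diag_inB w w' : diag_in (fun l => w l - w' l) = diag_in w - diag_in w'.
Proof. by rewrite !diag_inE -sumrB; apply: eq_bigr => l _; rewrite scalerBl. Qed.

Lemma diag_in_lincomb (I : Type) (r : seq I) (P : pred I) (c : I -> C)
    (F : I -> 'I_n -> C) :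
  diag_in (fun l => \sum_(i <- r | P i) c i * F i l) =
  \sum_(i <- r | P i) c i *: diag_in (F i).
Proof.
rewrite diag_inE; under eq_bigr do rewrite scaler_suml.
rewrite exchange_big; apply: eq_bigr => i _.
by rewrite diag_inE scaler_sumr; apply: eq_bigr => l _; rewrite scalerA.
Qed.

Lemma mulmx_diag_in x w : x *m diag_in w = \sum_l (w l * '[x, row l U]) *: row l U.
Proof.
rewrite diag_inE mulmx_sumr; apply: eq_bigr => l _.
by rewrite -scalemxAr mulmxA mulmx_rV_trC scalerA.
Qed.

Lemma dotmx_diag_in x z w :
  '[x *m diag_in w, z] = \sum_l w l * ('[x, row l U] * '[z, row l U]^*).
Proof.
rewrite mulmx_diag_in linear_sumlz; apply: eq_bigr => l _.
by rewrite linearZl_LR /= mulrA; congr (_ * _); rewrite hermC /= expr0 mul1r.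
Qed.

Lemma diag_in_trC w : (diag_in w)^t* = diag_in (fun l => (w l)^*).
Proof.
rewrite !diag_in_def !trmxC_mul trmxCK mulmxA; congr (_ *m _ *m _).
apply/matrixP => i j; rewrite !mxE rmorphMn eq_sym.
by case: eqP => [->|_]; rewrite ?mulr0n.
Qed.

Lemma dotmx_diag_in_ge0 w x : (forall l, 0 <= w l) -> 0 <= '[x *m diag_in w, x].
Proof.
move=> w_ge0; rewrite dotmx_diag_in sumr_ge0 // => l _.
by rewrite mulr_ge0 ?mul_conjC_ge0.
Qed.

Lemma sqrt_diag_in_trC w : (forall l, 0 <= w l) ->
  (sqrt_diag_in w)^t* = sqrt_diag_in w.
Proof.
move=> w_ge0; rewrite sqrt_diag_in_def diag_in_trC.
by apply: eq_diag_in => l; rewrite geC0_conj ?sqrtC_ge0.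
Qed.

Hypothesis U_unitary : U \is unitarymx.

Lemma row_diag_in l w : row l U *m diag_in w = w l *: row l U.
Proof.
have /row_unitarymxP U_on := U_unitary.
rewrite mulmx_diag_in (bigD1 l) //= U_on eqxx mulr1 big1 ?addr0 // => l' l'l.
by rewrite U_on eq_sym (negbTE l'l) mulr0 scale0r.
Qed.

Lemma diag_in_const c : diag_in (fun=> c) = c%:M.
Proof.
have UtU : U^t* *m U = 1%:M by apply: mulmx1C; apply/unitarymxP.
rewrite diag_in_def (_ : diag_mx _ = c%:M); last by apply/matrixP => i j; rewrite !mxE.
by rewrite mul_mx_scalar -scalemxAl UtU scalemx1.
Qed.

Lemma dotmx_coord x z : '[x, z] = \sum_l '[x, row l U] * '[z, row l U]^*.
Proof.
rewrite -[x in LHS]mulmx1 -diag_in_const dotmx_diag_in.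
by under eq_bigr do rewrite mul1r.
Qed.

Lemma diag_inM w w' : diag_in w *m diag_in w' = diag_in (fun l => w l * w' l).
Proof.
rewrite !diag_in_def !mulmxA (mulmxtVK _ U_unitary) -(mulmxA (U^t*)) mulmx_diag.
by congr (_ *m diag_mx _ *m _); apply/rowP => l; rewrite !mxE.
Qed.

Lemma dotmx_diag_in_subr x z w c :
  '[x *m diag_in (fun l => w l - c), z] = '[x *m diag_in w, z] - c * '[x, z].
Proof.
by rewrite diag_inB diag_in_const mulmxBr mul_mx_scalar linearBl linearZl_LR.
Qed.

Lemma dotmx_diag_in_subl x z w c :
  '[x *m diag_in (fun l => c - w l), z] = c * '[x, z] - '[x *m diag_in w, z].
Proof.
by rewrite diag_inB diag_in_const mulmxBr mul_mx_scalar linearBl linearZl_LR.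
Qed.

Lemma sqrt_diag_in_sqr w : sqrt_diag_in w *m sqrt_diag_in w = diag_in w.
Proof.
by rewrite sqrt_diag_in_def diag_inM; apply: eq_diag_in => l; rewrite -expr2 sqrtCK.
Qed.

Lemma sqrt_diag_inV w w' : (forall l, 0 < w l) -> (forall l, w' l = (w l)^-1) ->
  sqrt_diag_in w' *m sqrt_diag_in w = 1%:M.
Proof.
move=> w_gt0 w'E; rewrite !sqrt_diag_in_def diag_inM -diag_in_const.
apply: eq_diag_in => l; rewrite w'E -sqrtCM ?nnegrE ?invr_ge0 ?ltW //.
by rewrite mulVf ?sqrtC1 // gt_eqF.
Qed.

Lemma dotmx_sqrt_diag_in w x z : (forall l, 0 <= w l) ->
  '[x *m sqrt_diag_in w, z *m sqrt_diag_in w] = '[x *m diag_in w, z].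
Proof.
move=> w_ge0; rewrite -{2}(sqrt_diag_in_trC w_ge0) -dotmx_mulmxl.
by rewrite -mulmxA sqrt_diag_in_sqr.
Qed.

Lemma CauchySchwarz_diag_in w x z : (forall l, 0 <= w l) ->
  `|'[x *m diag_in w, z]| ^+ 2 <= '[x *m diag_in w, x] * '[z *m diag_in w, z].
Proof.
move=> w_ge0; rewrite -(dotmx_sqrt_diag_in x z w_ge0).
rewrite -(dotmx_sqrt_diag_in x x w_ge0) -(dotmx_sqrt_diag_in z z w_ge0).
exact: dotmx_CauchySchwarz.
Qed.

Lemma dotmx_diag_in_subr_ge0 w c x : (forall l, 0 <= w l - c) ->
  0 <= '[x *m diag_in w, x] - c * '[x].
Proof. by move=> w_ge0; rewrite -dotmx_diag_in_subr dotmx_diag_in_ge0. Qed.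

Lemma dotmx_diag_in_subl_ge0 w c x : (forall l, 0 <= c - w l) ->
  0 <= c * '[x] - '[x *m diag_in w, x].
Proof. by move=> w_ge0; rewrite -dotmx_diag_in_subl dotmx_diag_in_ge0. Qed.

Lemma CauchySchwarz_diag_in_subr w c x z :
  (forall l, 0 <= w l - c) -> '[x, z] = 0 ->
  `|'[x *m diag_in w, z]| ^+ 2 <=
  ('[x *m diag_in w, x] - c * '[x]) * ('[z *m diag_in w, z] - c * '[z]).
Proof.
move=> w_ge0 xz0; have := CauchySchwarz_diag_in x z w_ge0.
rewrite (dotmx_diag_in_subr x z w c) (dotmx_diag_in_subr x x w c).
by rewrite (dotmx_diag_in_subr z z w c) xz0 mulr0 subr0.
Qed.

Lemma CauchySchwarz_diag_in_subl w c x z :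
  (forall l, 0 <= c - w l) -> '[x, z] = 0 ->
  `|'[x *m diag_in w, z]| ^+ 2 <=
  (c * '[x] - '[x *m diag_in w, x]) * (c * '[z] - '[z *m diag_in w, z]).
Proof.
move=> w_ge0 xz0; have := CauchySchwarz_diag_in x z w_ge0.
rewrite (dotmx_diag_in_subl x z w c) (dotmx_diag_in_subl x x w c).
by rewrite (dotmx_diag_in_subl z z w c) xz0 mulr0 sub0r normrN.
Qed.

Lemma dotmx_proj_compl (P : pred 'I_n) x :
  let Q := diag_in (fun l => (P l)%:R) in '[x *m Q, x - x *m Q] = 0.
Proof.
move=> Q; have Q_trC : Q^t* = Q.
  by rewrite diag_in_trC; apply: eq_diag_in => l; rewrite conjC_nat.
have QQ : Q *m Q = Q.
  by rewrite diag_inM; apply: eq_diag_in => l; case: (P l); rewrite ?mulr1 ?mulr0.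
by rewrite linearBr /= -{3}Q_trC -dotmx_mulmxl -mulmxA QQ subrr.
Qed.

End DiagIn.

Section Hermitian.
Variable R : rcfType.
Local Notation C := R[i].
Local Open Scope complex_scope.

Lemma conjC_real_complex (x : R) : Num.conj x%:C = x%:C.
Proof. exact: conjc_real. Qed.

Lemma ltr0c (x : R) : (0 < x%:C) = (0 < x).
Proof. by simpc. Qed.

Lemma adjmxE m n (M : 'M[C]_(m, n)) : adjmx M = M^t*.
Proof. by rewrite /adjmx map_trmx. Qed.

Lemma psdmxE n (A : 'M[C]_n) :
  psdmx A <-> A^t* = A /\ forall v, 0 <= '[v *m A, v].
Proof.
rewrite /psdmx adjmxE; split=> -[-> A_ge0]; split=> // v.
  by rewrite dotmxE -adjmxE.
by rewrite adjmxE -dotmxE.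
Qed.

Lemma psdmx_congr n (A S : 'M[C]_n) : psdmx A -> psdmx (S^t* *m A *m S).
Proof.
move=> /psdmxE[A_herm A_ge0]; apply/psdmxE; split.
  by rewrite !trmxC_mul trmxCK A_herm mulmxA.
by move=> v; rewrite !mulmxA dotmx_mulmxl A_ge0.
Qed.

Lemma hermitian_diag_in n (H : 'M[C]_n) : H^t* = H ->
  exists2 U : 'M[C]_n, U \is unitarymx &
    exists d : 'I_n -> R, H = diag_in U (fun l => (d l)%:C) /\
      char_poly H = \prod_l ('X - ((d l)%:C)%:P).
Proof.
move=> H_herm.
have herm : H \is hermsymmx by rewrite is_hermitianmxE expr0 scale1r H_herm.
have /hermitian_normalmx /orthomx_spectralP H_eq := herm.
have /mxOverP sp_real := hermitian_spectral_diag_real herm.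
have U_unitary := spectral_unitarymx H.
set U := spectralmx H in H_eq U_unitary; set sp := spectral_diag H in H_eq sp_real.
have sp_Re : sp = \row_l (complex.Re (sp 0 l))%:C.
  by apply/rowP => l; rewrite mxE RRe_real // sp_real.
have H_diag : H = diag_in U (fun l => (complex.Re (sp 0 l))%:C).
  by rewrite diag_in_def -sp_Re -invmx_unitary.
exists U; first exact: U_unitary.
exists (fun l => complex.Re (sp 0 l)); split; first exact: H_diag.
rewrite {1}H_diag diag_in_def char_poly_similar; last exact/mulmx1C/unitarymxP.
rewrite char_poly_trig ?diag_mx_is_trig //.
by apply: eq_bigr => l _; rewrite !mxE eqxx.
Qed.

Lemma hermitian_diag_in_eig n (H : 'M[C]_n) (s : seq R) : H^t* = H ->
  char_poly H = \prod_(x <- s) ('X - (x%:C)%:P) ->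
  size s = n /\ exists2 U : 'M[C]_n, U \is unitarymx &
                  H = diag_in U (fun i => (s`_i)%:C).
Proof.
move=> /hermitian_diag_in[U U_unitary [d [H_diag H_char]]] s_char.
have : perm_eq [seq x%:C | x <- s] [tuple (d l)%:C | l < n].
  apply: prod_XsubC_eq; rewrite !big_map -s_char H_char -enumT big_enum.
  exact: eq_bigl.
move=> s_perm; have size_s : size s = n.
  by rewrite -(size_map (fun x => x%:C)) (perm_size s_perm) size_tuple.
split => //; have [p s_p] := tuple_permP s_perm.
have sE (i : 'I_n) : s`_i = d (p i).
  apply: (@complexI R); have := congr1 (fun t => nth 0 t i) s_p.
  rewrite (nth_map 0) ?size_s ?ltn_ord // => ->.
  rewrite /= (nth_map i) ?size_enum_ord ?ltn_ord //.
  by rewrite nth_ord_enum tnth_map tnth_ord_tuple.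
pose V := \matrix_(i, j) U (p i) j.
have rowV i : row i V = row (p i) U by apply/rowP => j; rewrite !mxE.
exists V.
  apply/row_unitarymxP => i j; rewrite !rowV.
  by rewrite (row_unitarymxP U_unitary) (inj_eq perm_inj).
rewrite H_diag !diag_inE (reindex_inj (@perm_inj _ p)) /=.
by apply: eq_bigr => i _; rewrite rowV sE.
Qed.

Lemma eigenvalue_diag_in n (U : 'M[C]_n) (w : 'I_n -> C) l :
  U \is unitarymx -> eigenvalue (diag_in U w) (w l).
Proof.
move=> U_unitary; apply/eigenvalueP; exists (row l U); first exact: row_diag_in.
apply/eqP => l0; have := row_unitarymxP U_unitary l l.
by rewrite l0 eqxx linear0l => /eqP; rewrite eq_sym oner_eq0.
Qed.

Lemma diag_in_ge0 n (U : 'M[C]_n) (w : 'I_n -> R) l : U \is unitarymx ->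
  (forall v, 0 <= '[v *m diag_in U (fun l => (w l)%:C), v]) -> 0 <= w l.
Proof.
move=> U_unitary /(_ (row l U)).
by rewrite row_diag_in // linearZl_LR /= (row_unitarymxP U_unitary) eqxx mulr1 lecR.
Qed.

Lemma pdmx_eigenvalue_gt0 n (Z : 'M[C]_n) (c : R) :
  pdmx Z -> eigenvalue Z c%:C -> 0 < c.
Proof.
move=> [_ Z_pos] /eigenvalueP[v vZ v_neq0]; have := Z_pos v v_neq0.
rewrite adjmxE -dotmxE vZ linearZl_LR /= pmulr_lgt0 ?ltcR //.
by rewrite dnorm_gt0.
Qed.

Lemma pdmx_diag_in_bounds n (Z : 'M[C]_n) (a b : R) : pdmx Z ->
  (forall c, eigenvalue Z c -> (b%:C <= c) && (c <= a%:C)) ->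
  exists2 U : 'M[C]_n, U \is unitarymx &
    exists d : 'I_n -> R,
      Z = diag_in U (fun l => (d l)%:C) /\ forall l, b <= d l <= a.
Proof.
move=> [Z_herm _] Z_spec; rewrite adjmxE in Z_herm.
have [U U_unitary [d [Z_diag _]]] := hermitian_diag_in Z_herm.
exists U; first exact: U_unitary.
exists d; split; first exact: Z_diag.
move=> l; rewrite -!lecR; apply: Z_spec; rewrite Z_diag.
exact: eigenvalue_diag_in.
Qed.

Lemma psdmx_diag_in n (P : 'M[C]_n) (s : seq R) : psdmx P ->
  char_poly P = \prod_(x <- s) ('X - (x%:C)%:P) ->
  [/\ size s = n,
    exists2 V : 'M[C]_n, V \is unitarymx & P = diag_in V (fun j => (s`_j)%:C)
    & forall j, 0 <= s`_j].
Proof.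
move=> /psdmxE[P_herm P_ge0] P_char.
have [size_s [V V_unitary P_diag]] := hermitian_diag_in_eig P_herm P_char.
split=> [//||j]; first by exists V.
have [jn|nj] := ltnP j n; last by rewrite nth_default // size_s.
apply: (@diag_in_ge0 n V (fun i => s`_i) (Ordinal jn) V_unitary) => v.
by rewrite -P_diag.
Qed.

Lemma is_Sing_diag_in n (M : 'M[C]_n) (s : seq R) : is_Sing M s ->
  exists2 X : 'M[C]_n, X \is unitarymx &
    M^t* *m M = diag_in X (fun i => (s`_i ^+ 2)%:C) /\ forall i : 'I_n, 0 <= s`_i.
Proof.
move=> [_ [s_ge0 s_char]].
have H_herm : (M^t* *m M)^t* = M^t* *m M by rewrite trmxC_mul trmxCK.
have H_char : char_poly (M^t* *m M) =
    \prod_(x <- [seq y ^+ 2 | y <- s]) ('X - (x%:C)%:P).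
  by rewrite big_map -adjmxE.
have [size_s [X X_unitary H_diag]] := hermitian_diag_in_eig H_herm H_char.
rewrite size_map in size_s.
exists X; first exact: X_unitary.
split=> [|i]; last by apply: (allP s_ge0); rewrite mem_nth // size_s.
rewrite H_diag; apply: eq_diag_in => i.
by rewrite (nth_map 0) // size_s.
Qed.

Lemma left_singular_vectors n (M X : 'M[C]_n) (s : 'I_n -> R) :
  X \is unitarymx -> (forall i, 0 <= s i) ->
  M^t* *m M = diag_in X (fun i => (s i ^+ 2)%:C) ->
  exists u : 'I_n -> 'rV[C]_n,
    [/\ forall i j, i != j -> '[u i, u j] = 0, forall i, '[u i] <= 1
      & forall i, '[u i *m M, row i X] = (s i)%:C].
Proof.
move=> X_unitary s_ge0 MM.
have X_on := row_unitarymxP X_unitary.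
have MtM i j : '[row i X *m M^t*, row j X *m M^t*] = (s i ^+ 2)%:C * (i == j)%:R.
  by rewrite -dotmx_mulmxl -mulmxA MM row_diag_in // linearZl_LR /= X_on.
exists (fun i => if s i == 0 then 0 else ((s i)^-1)%:C *: (row i X *m M^t*)).
split=> [i j ij | i | i]; case: eqP => [si0 | /eqP si_neq0].
all: rewrite ?linear0l ?linear0r //.
- by case: eqP; rewrite ?linear0r // linearZl_LR linearZr_LR /= MtM (negbTE ij) !mulr0.
- rewrite linearZl_LR linearZr_LR /= MtM eqxx mulr1 conjC_real_complex -!rmorphM /=.
  by rewrite mulrA -expr2 -exprMn mulVf // expr1n rmorph1.
- by rewrite si0.
- rewrite -scalemxAl linearZl_LR /= -mulmxA MM row_diag_in // linearZl_LR /=.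
  by rewrite X_on eqxx mulr1 -rmorphM /= expr2 mulrA mulVf ?mul1r.
Qed.

End Hermitian.

Section ScalarInequalities.
Variable R : rcfType.
Implicit Types a b al ga nq nr x y B : R.

Lemma wielandt_ineq_normed a b al ga B : 0 < b -> b <= a ->
  b <= al <= a -> b <= ga <= a -> 0 <= B ->
  B <= (al - b) * (ga - b) -> B <= (a - al) * (a - ga) ->
  B * (a + b) ^+ 2 <= (a - b) ^+ 2 * (al * ga).
Proof.
(* With s := al + ga, the hypotheses give (al ga - B) (a + b)^2 >= a b s^2
   (compare s with a + b), and s^2 >= 4 al ga. *)
move=> b0 ba /andP[h1 h2] /andP[h3 h4] B0 H2 H3; set s := al + ga.
have key : a * b * s ^+ 2 <= (al * ga - B) * (a + b) ^+ 2.
  have [sle|sge] := lerP s (a + b).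
    have p1 : 0 <= b * ((a + b - s) * (a * s - b * (a + b))).
      by apply: mulr_ge0; [lra | apply: mulr_ge0; [lra | rewrite /s; nra]].
    have p2 : (b * s - b ^+ 2) * (a + b) ^+ 2 <= (al * ga - B) * (a + b) ^+ 2.
      by apply: ler_wpM2r; [rewrite sqr_ge0 | rewrite /s; nra].
    have e : (b * s - b ^+ 2) * (a + b) ^+ 2 - a * b * s ^+ 2 =
             b * ((a + b - s) * (a * s - b * (a + b))) by ring.
    lra.
  have p1 : 0 <= a * ((s - (a + b)) * (a * (a + b) - b * s)).
    by apply: mulr_ge0; [lra | apply: mulr_ge0; [lra | rewrite /s; nra]].
  have p2 : (a * s - a ^+ 2) * (a + b) ^+ 2 <= (al * ga - B) * (a + b) ^+ 2.
    by apply: ler_wpM2r; [rewrite sqr_ge0 | rewrite /s; nra].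
  have e : (a * s - a ^+ 2) * (a + b) ^+ 2 - a * b * s ^+ 2 =
           a * ((s - (a + b)) * (a * (a + b) - b * s)) by ring.
  lra.
have amgm : 4%:R * (al * ga) <= s ^+ 2.
  by rewrite -subr_ge0 (_ : _ - _ = (al - ga) ^+ 2) ?sqr_ge0 // /s; ring.
have : a * b * (4%:R * (al * ga)) <= a * b * s ^+ 2.
  by apply: ler_wpM2l amgm; apply: mulr_ge0; lra.
rewrite (_ : (a - b) ^+ 2 = (a + b) ^+ 2 - 4%:R * a * b); last by ring.
nra.
Qed.

Lemma wielandt_ineq a b al ga nq nr B : 0 < b -> b <= a -> 0 <= nq -> 0 <= nr ->
  b * nq <= al <= a * nq -> b * nr <= ga <= a * nr -> 0 <= B ->
  B <= (al - b * nq) * (ga - b * nr) -> B <= (a * nq - al) * (a * nr - ga) ->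
  B * (a + b) ^+ 2 <= (a - b) ^+ 2 * (al * ga).
Proof.
move=> b0 ba nq0 nr0 /andP[h1 h2] /andP[h3 h4] B0 H2 H3.
have [nq_eq0 | nq_neq0] := eqVneq nq 0.
  have al0 : al = 0 by rewrite nq_eq0 mulr0 in h1 h2; lra.
  have -> : B = 0 by move: H2; rewrite al0 nq_eq0 mulr0 subr0 mul0r; lra.
  by rewrite al0 !mul0r mulr0.
have [nr_eq0 | nr_neq0] := eqVneq nr 0.
  have ga0 : ga = 0 by rewrite nr_eq0 mulr0 in h3 h4; lra.
  have -> : B = 0 by move: H2; rewrite ga0 nr_eq0 mulr0 subr0 mulr0; lra.
  by rewrite ga0 !mul0r !mulr0.
have nq_gt0 : 0 < nq by rewrite lt_def nq_neq0.
have nr_gt0 : 0 < nr by rewrite lt_def nr_neq0.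
have nqr_gt0 : 0 < nq * nr by apply: mulr_gt0.
have hq : b <= al / nq <= a by rewrite ler_pdivlMr // ler_pdivrMr // h1 h2.
have hr : b <= ga / nr <= a by rewrite ler_pdivlMr // ler_pdivrMr // h3 h4.
have B'0 : 0 <= B / (nq * nr) by rewrite divr_ge0 // ltW.
have := wielandt_ineq_normed b0 ba hq hr B'0.
have -> : (al / nq - b) * (ga / nr - b) = (al - b * nq) * (ga - b * nr) / (nq * nr).
  by field; rewrite nq_neq0 nr_neq0.
have -> : (a - al / nq) * (a - ga / nr) = (a * nq - al) * (a * nr - ga) / (nq * nr).
  by field; rewrite nq_neq0 nr_neq0.
rewrite !ler_pM2r ?invr_gt0 // => /(_ H2 H3).
have -> : B / (nq * nr) * (a + b) ^+ 2 = B * (a + b) ^+ 2 / (nq * nr).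
  by field; rewrite nq_neq0 nr_neq0.
have -> : (a - b) ^+ 2 * (al / nq * (ga / nr)) = (a - b) ^+ 2 * (al * ga) / (nq * nr).
  by field; rewrite nq_neq0 nr_neq0.
by rewrite ler_pM2r ?invr_gt0.
Qed.

Lemma wielandt_lower_bound a b al ga nq nr x y : 0 < b -> b <= a ->
  0 <= nq -> 0 <= nr -> b * nq <= al <= a * nq -> b * nr <= ga <= a * nr ->
  x ^+ 2 + y ^+ 2 <= (al - b * nq) * (ga - b * nr) ->
  x ^+ 2 + y ^+ 2 <= (a * nq - al) * (a * nr - ga) ->
  4%:R * a * b * al <= (a + b) ^+ 2 * (al + ga + 2%:R * x).
Proof.
move=> b0 ba nq0 nr0 hq hr H2 H3.
have B0 : 0 <= x ^+ 2 + y ^+ 2 by rewrite addr_ge0 ?sqr_ge0.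
have W := wielandt_ineq b0 ba nq0 nr0 hq hr B0 H2 H3.
move: hq hr => /andP[h1 h2] /andP[h3 h4].
set K := (a + b) ^+ 2 in W *; set L := (a - b) ^+ 2 in W.
have K0 : 0 <= K by rewrite sqr_ge0.
have L0 : 0 <= L by rewrite sqr_ge0.
have al0 : 0 <= al by nra.
have ga0 : 0 <= ga by nra.
rewrite (_ : 4%:R * a * b = K - L); last by rewrite /K /L; ring.
suff sq : (2%:R * K * x) ^+ 2 <= (L * al + K * ga) ^+ 2.
  have V0 : 0 <= L * al + K * ga by apply: addr_ge0; apply: mulr_ge0.
  have : - (2%:R * K * x) <= L * al + K * ga by nra.
  lra.
have s1 : (2%:R * K * x) ^+ 2 <= 4%:R * K * (K * (x ^+ 2 + y ^+ 2)).
  rewrite (_ : (2%:R * K * x) ^+ 2 = 4%:R * K * (K * x ^+ 2)); last by ring.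
  apply: ler_wpM2l; first by rewrite mulr_ge0.
  by apply: ler_wpM2l => //; rewrite lerDl sqr_ge0.
have s2 : 4%:R * K * (K * (x ^+ 2 + y ^+ 2)) <= 4%:R * K * (L * (al * ga)).
  by apply: ler_wpM2l; [rewrite mulr_ge0 | rewrite mulrC].
have s3 : 4%:R * K * (L * (al * ga)) <= (L * al + K * ga) ^+ 2.
  by rewrite -subr_ge0 (_ : _ - _ = (L * al - K * ga) ^+ 2) ?sqr_ge0 //; ring.
lra.
Qed.

Lemma kantorovich_ineq n (w d : 'I_n -> R) a b : 0 < b -> b <= a ->
  (forall l, 0 <= w l) -> (forall l, b <= d l <= a) ->
  4%:R * a * b * ((\sum_l d l * w l) * (\sum_l (d l)^-1 * w l)) <=
  (a + b) ^+ 2 * (\sum_l w l) ^+ 2.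
Proof.
move=> b0 ba w0 dab.
set X := \sum_l d l * w l; set Y := \sum_l (d l)^-1 * w l; set W := \sum_l w l.
(* [d w + a b w / d <= (a + b) w] since [(a - d) (d - b) >= 0] *)
have XY : X + a * b * Y <= (a + b) * W.
  rewrite /X /Y /W !mulr_sumr -big_split /=; apply: ler_sum => l _.
  have /andP[dbl dal] := dab l; have dl : 0 < d l by apply: lt_le_trans dbl.
  rewrite -subr_ge0 (_ : _ - _ = w l * ((a - d l) * (d l - b)) / d l).
    by apply: divr_ge0; [apply: mulr_ge0; rewrite ?mulr_ge0 ?subr_ge0 | exact: ltW].
  by field; rewrite gt_eqF.
have X0 : 0 <= X.
  apply: sumr_ge0 => l _; have /andP[dbl _] := dab l.
  by rewrite mulr_ge0 // (le_trans (ltW b0)).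
have Y0 : 0 <= Y.
  apply: sumr_ge0 => l _; have /andP[dbl _] := dab l.
  by rewrite mulr_ge0 // invr_ge0 (le_trans (ltW b0)).
have ab0 : 0 <= a * b by apply: mulr_ge0; lra.
have s1 : 4%:R * a * b * (X * Y) <= (X + a * b * Y) ^+ 2.
  by rewrite -subr_ge0 (_ : _ - _ = (X - a * b * Y) ^+ 2) ?sqr_ge0 //; ring.
have s2 : (X + a * b * Y) ^+ 2 <= ((a + b) * W) ^+ 2.
  have h0 : 0 <= X + a * b * Y by apply: addr_ge0 => //; apply: mulr_ge0.
  nra.
by rewrite -exprMn; lra.
Qed.

End ScalarInequalities.

Section ComplexReal.
Variable R : rcfType.
Local Open Scope complex_scope.

Lemma real_complexE (z : R[i]) : z \is Num.real -> z = (complex.Re z)%:C.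
Proof. by move=> /RRe_real. Qed.

Lemma mul_conjC_Re_Im (z : R[i]) :
  z * z^* = ((complex.Re z) ^+ 2 + (complex.Im z) ^+ 2)%:C.
Proof. by rewrite add_Re2_Im2 sqr_normc. Qed.

Lemma Re_realM (x : R) (z : R[i]) : complex.Re (x%:C * z) = x * complex.Re z.
Proof. by case: z => z1 z2 /=; ring. Qed.

Lemma Re_le_norm (z : R[i]) (x : R) : `|z| <= x%:C -> complex.Re z <= x.
Proof.
move=> zx; rewrite -lecR (le_trans _ zx) // (le_trans _ (normc_ge_Re z)) //.
by rewrite lecR ler_norm.
Qed.

Lemma wielandt_lower_boundC (a b : R) (al ga nq nr be : R[i]) : 0 < b -> b <= a ->
  0 <= nq -> 0 <= nr -> 0 <= al - b%:C * nq -> 0 <= a%:C * nq - al ->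
  0 <= ga - b%:C * nr -> 0 <= a%:C * nr - ga ->
  `|be| ^+ 2 <= (al - b%:C * nq) * (ga - b%:C * nr) ->
  `|be| ^+ 2 <= (a%:C * nq - al) * (a%:C * nr - ga) ->
  (4%:R * a * b)%:C * al <= ((a + b) ^+ 2)%:C * (al + be + (be^* + ga)).
Proof.
move=> b0 ba nq0 nr0 h1 h2 h3 h4; rewrite (addrC (be^*) ga) addrACA.
have real_shift (x y : R[i]) (c : R) : 0 <= y -> 0 <= x - c%:C * y -> x \is Num.real.
  move=> y0 xy0; rewrite -(subrK (c%:C * y) x).
  apply: realD; [exact: ger0_real | apply: realM; last exact: ger0_real].
  by apply/complex_realP; exists c.
have alE := real_complexE (real_shift _ _ _ nq0 h1).
have gaE := real_complexE (real_shift _ _ _ nr0 h3).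
have nqE := real_complexE (ger0_real nq0); have nrE := real_complexE (ger0_real nr0).
rewrite alE gaE nqE nrE in h1 h2 h3 h4 nq0 nr0 *.
have two : 2 = (2%:R : R)%:C by rewrite rmorph_nat.
rewrite -add_Re2_Im2 addcJ two -!rmorphM -!rmorphB -!rmorphD -!rmorphM /= !lecR.
rewrite -!rmorphM -!rmorphB /= !lecR in h1 h2 h3 h4 nq0 nr0.
move=> CS1 CS2; apply: wielandt_lower_bound CS1 CS2 => //; apply/andP; split; lra.
Qed.

End ComplexReal.

Section WielandtKantorovich.
Variables (R : rcfType) (n : nat) (U : 'M[R[i]]_n) (a b : R) (d : 'I_n -> R).
Local Open Scope complex_scope.
Hypotheses (U_unitary : U \is unitarymx) (b_gt0 : 0 < b) (b_le_a : b <= a).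
Hypothesis d_in : forall l, b <= d l <= a.
Local Notation D := (diag_in U (fun l => (d l)%:C)).

Lemma wielandt_diag_in q r : '[q, r] = 0 ->
  (4%:R * a * b)%:C * '[q *m D, q] <= ((a + b) ^+ 2)%:C * '[(q + r) *m D, q + r].
Proof.
(* Cauchy-Schwarz for the nonnegative forms with weights [d - b] and [a - d],
   in which the cross term of [q] and [r] is still '[q *m D, r] since [q] and
   [r] are orthogonal. *)
move=> qr0.
have d_b_ge0 l : 0 <= (d l)%:C - b%:C by rewrite subr_ge0 lecR; case/andP: (d_in l).
have a_d_ge0 l : 0 <= a%:C - (d l)%:C by rewrite subr_ge0 lecR; case/andP: (d_in l).
have CS_b := CauchySchwarz_diag_in_subr U_unitary d_b_ge0 qr0.
have CS_a := CauchySchwarz_diag_in_subl U_unitary a_d_ge0 qr0.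
have D_trC : D^t* = D by rewrite diag_in_trC; apply: eq_diag_in => l; exact: conjc_real.
have rDq : '[r *m D, q] = '[q *m D, r]^*.
  by rewrite dotmx_mulmxl D_trC hermC /= expr0 mul1r.
have expand : '[(q + r) *m D, q + r] =
    '[q *m D, q] + '[q *m D, r] + ('[q *m D, r]^* + '[r *m D, r]).
  by rewrite mulmxDl linearDl !linearDr /= rDq.
rewrite [X in _ <= _ * X]expand.
apply: wielandt_lower_boundC CS_b CS_a; rewrite ?dnorm_ge0 //.
- exact: dotmx_diag_in_subr_ge0.
- exact: dotmx_diag_in_subl_ge0.
- exact: dotmx_diag_in_subr_ge0.
- exact: dotmx_diag_in_subl_ge0.
Qed.

Lemma kantorovich_diag_in p : '[p] = 1 ->
  (4%:R * a * b)%:C * ('[p *m D, p] * '[p *m diag_in U (fun l => ((d l)^-1)%:C), p])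
  <= ((a + b) ^+ 2)%:C.
Proof.
move=> p_unit.
pose W l := complex.Re '[p, row l U] ^+ 2 + complex.Im '[p, row l U] ^+ 2.
have formE (w : 'I_n -> R) :
    '[p *m diag_in U (fun l => (w l)%:C), p] = (\sum_l w l * W l)%:C.
  rewrite dotmx_diag_in // rmorph_sum; apply: eq_bigr => l _.
  by rewrite mul_conjC_Re_Im rmorphM.
have W_sum : \sum_l W l = 1.
  apply: (@complexI R); rewrite rmorph1 -p_unit (dotmx_coord U_unitary) rmorph_sum.
  by apply: eq_bigr => l _; rewrite mul_conjC_Re_Im.
have W_ge0 l : 0 <= W l by rewrite addr_ge0 ?sqr_ge0.
(* The occurrences are selected explicitly: matching a dot product against the
   constants [_%:C] makes the unifier unfold both, which takes minutes. *)
rewrite [X in _ * (X * _)]formE [X in _ * (_ * X)]formE -!rmorphM lecR.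
by have := kantorovich_ineq b_gt0 b_le_a W_ge0 d_in; rewrite W_sum expr1n mulr1.
Qed.

Lemma sqrt_wielandt_kantorovich : exists S Si : 'M[R[i]]_n,
  [/\ S^t* = S, Si^t* = Si, Si *m S = 1%:M & S *m S = D] /\
  [/\ forall q r, '[q, r] = 0 ->
        (4%:R * a * b)%:C * '[q *m S] <= ((a + b) ^+ 2)%:C * '[(q + r) *m S]
    & forall p, '[p] = 1 ->
        (4%:R * a * b)%:C * ('[p *m S] * '[p *m Si]) <= ((a + b) ^+ 2)%:C].
Proof.
have d_gt0 l : 0 < d l by case/andP: (d_in l) => bd _; apply: lt_le_trans bd.
have d_ge0 l : 0 <= (d l)%:C by rewrite ler0c ltW.
have dV_ge0 l : 0 <= ((d l)^-1)%:C by rewrite ler0c invr_ge0 ltW.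
exists (sqrt_diag_in U (fun l => (d l)%:C)), (sqrt_diag_in U (fun l => ((d l)^-1)%:C)).
split; split.
- exact: sqrt_diag_in_trC.
- exact: sqrt_diag_in_trC.
- by apply: (sqrt_diag_inV U_unitary) => l; rewrite ?ltr0c ?fmorphV.
- exact: sqrt_diag_in_sqr.
- move=> q r qr0; rewrite [X in _ * X <= _](dotmx_sqrt_diag_in U_unitary _ _ d_ge0).
  rewrite [X in _ <= _ * X](dotmx_sqrt_diag_in U_unitary _ _ d_ge0).
  exact: wielandt_diag_in.
- move=> p p_unit; rewrite [X in _ * (X * _)](dotmx_sqrt_diag_in U_unitary _ _ d_ge0).
  rewrite [X in _ * (_ * X)](dotmx_sqrt_diag_in U_unitary _ _ dV_ge0).
  exact: kantorovich_diag_in.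
Qed.

End WielandtKantorovich.

Section SingularValueBound.
Variables (R : rcfType) (n : nat) (V X S Si : 'M[R[i]]_n) (a b : R).
Local Open Scope complex_scope.
Hypotheses (V_unitary : V \is unitarymx) (X_unitary : X \is unitarymx).
Hypotheses (b_gt0 : 0 < b) (b_le_a : b <= a).
Hypotheses (Si_S : Si *m S = 1%:M) (Si_trC : Si^t* = Si).
Hypothesis wielandt_S : forall q r, '[q, r] = 0 ->
  (4%:R * a * b)%:C * '[q *m S] <= ((a + b) ^+ 2)%:C * '[(q + r) *m S].
Hypothesis kantorovich_S : forall p, '[p] = 1 ->
  (4%:R * a * b)%:C * ('[p *m S] * '[p *m Si]) <= ((a + b) ^+ 2)%:C.

Local Notation c := ((a + b) / (2 * Num.sqrt (a * b))).

Lemma norm_le_kantorovich_const (z Y : R[i]) : `|z| ^+ 2 <= Y ->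
  (4%:R * a * b)%:C * Y <= ((a + b) ^+ 2)%:C -> `|z| <= c%:C.
Proof.
move=> zY Yab; have ab_gt0 : 0 < a * b by rewrite mulr_gt0 // (lt_le_trans b_gt0).
have sqrt_gt0 : 0 < Num.sqrt (a * b) by rewrite sqrtr_gt0.
have c_ge0 : 0 <= c by rewrite divr_ge0 ?mulr_ge0 ?ltW ?addr_gt0 // (lt_le_trans b_gt0).
have c_sqr : (a + b) ^+ 2 = 4%:R * a * b * c ^+ 2.
  rewrite expr_div_n exprMn sqr_sqrtr ?ltW //; field.
  by rewrite !gt_eqF // (lt_le_trans b_gt0).
have := @ler_pXn2r _ 2 isT `|z| c%:C; rewrite !nnegrE normr_ge0 ler0c c_ge0.
move=> /(_ isT isT) <-; apply: le_trans zY _; rewrite -rmorphXn.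
have ab4_gt0 : 0 < 4%:R * a * b by rewrite -mulrA mulr_gt0.
rewrite -(@ler_pM2l _ (4%:R * a * b)%:C) ?ltr0c //.
by rewrite -rmorphM /= -c_sqr.
Qed.

Lemma proj_term_le (P : pred 'I_n) y x : '[y] <= 1 -> '[x] = 1 ->
  `|'[y *m Si *m diag_in V (fun j => (P j)%:R) *m S, x]| <= c%:C.
Proof.
move=> y_le1 x_unit; set q := y *m Si *m _.
apply: (norm_le_kantorovich_const (Y := '[q *m S])).
  by rewrite -[X in _ <= X]mulr1 -x_unit dotmx_CauchySchwarz.
apply: le_trans (wielandt_S (dotmx_proj_compl V_unitary P (y *m Si))) _.
rewrite [q + _]addrC subrK -mulmxA Si_S mulmx1.
by rewrite ler_piMr // lecR sqr_ge0.
Qed.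

Lemma rank_one_term_le (K : pred 'I_n) (u : 'I_n -> 'rV_n) p :
  (forall i j, K i -> K j -> i != j -> '[u i, u j] = 0) ->
  (forall i, K i -> '[u i] <= 1) -> '[p] = 1 ->
  `|\sum_(i | K i) '[u i, p *m Si] * '[p *m S, row i X]| <= c%:C.
Proof.
move=> u_orth u_le1 p_unit.
set w := \sum_(i | K i) '[p *m Si, u i] *: row i X.
have -> : \sum_(i | K i) '[u i, p *m Si] * '[p *m S, row i X] = '[p *m S, w].
  rewrite linear_sumr; apply: eq_bigr => i _.
  by rewrite linearZr_LR /= hermC /= expr0 mul1r.
apply: (norm_le_kantorovich_const (Y := '[p *m S] * '[p *m Si])).
  2: exact: kantorovich_S.
apply: le_trans (dotmx_CauchySchwarz _ w) _.
apply: ler_wpM2l; first exact: dnorm_ge0.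
rewrite /w dnorm_sum_orthonormal; first exact: Bessel.
exact/row_unitarymxP.
Qed.

Section Truncations.
Variables (k : nat) (u : 'I_n -> 'rV[R[i]]_n).
Hypotheses (k_le_n : (k <= n)%N) (u_orth : forall i j, i != j -> '[u i, u j] = 0).
Hypothesis u_le1 : forall i, '[u i] <= 1.

Let T m := \sum_(i < n | (i < k)%N)
  '[u i *m Si *m diag_in V (fun j => ((j <= m)%N)%:R) *m S, row i X].

Let sum_const_prefix (z : R[i]) t : (t <= n)%N -> \sum_(i < n | (i < t)%N) z = z *+ t.
Proof. by move=> tn; rewrite -(big_ord_widen _ (fun=> z)) // sumr_const card_ord. Qed.

Let T_le_k m : `|T m| <= c%:C *+ k.
Proof.
rewrite -sum_const_prefix //; apply: le_trans (ler_norm_sum _ _ _) _.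
apply: ler_sum => i _; apply: proj_term_le => //.
by rewrite (row_unitarymxP X_unitary) eqxx.
Qed.

Let T_expand m : T m = \sum_(j < n | (j <= m)%N) \sum_(i < n | (i < k)%N)
  '[u i, row j V *m Si] * '[row j V *m S, row i X].
Proof.
rewrite exchange_big /=; apply: eq_bigr => i _.
rewrite mulmx_diag_in mulmx_suml linear_sumlz [RHS]big_mkcond /=.
apply: eq_bigr => j _; rewrite -scalemxAl linearZl_LR /=.
by case: leqP => _; [rewrite mul1r dotmx_mulmxl Si_trC | rewrite !mul0r].
Qed.

Let T_le_m m : (m < n)%N -> `|T m| <= c%:C *+ m.+1.
Proof.
move=> m_lt_n; rewrite T_expand -(sum_const_prefix _ m_lt_n).
apply: le_trans (ler_norm_sum _ _ _) _; apply: ler_sum => j _.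
apply: rank_one_term_le => [i i' _ _|i _|]; [exact: u_orth | exact: u_le1 |].
by rewrite (row_unitarymxP V_unitary) eqxx.
Qed.

Variables (lam sig : seq R).
Hypotheses (lam_sorted : sorted >=%R lam) (size_lam : size lam = n).
Hypothesis lam_ge0 : forall j, 0 <= lam`_j.
Hypothesis u_sig : forall i,
  '[u i *m (Si *m diag_in V (fun j => (lam`_j)%:C) *m S), row i X] = (sig`_i)%:C.

Lemma sum_sig_le : \sum_(i < k) sig`_i <= c * \sum_(i < k) lam`_i.
Proof.
pose gap m := lam`_m - lam`_m.+1.
have lam_n : lam`_n = 0 by rewrite nth_default // size_lam.
have gap_ge0 m : 0 <= gap m.
  rewrite subr_ge0; case: (ltnP m.+1 n) => [mn | nm].
    by move/sortedP: lam_sorted => /(_ 0 m); rewrite size_lam => /(_ mn).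
  by rewrite nth_default ?size_lam.
have P_gaps : diag_in V (fun j => (lam`_j)%:C) =
    \sum_(m < n) (gap m)%:C *: diag_in V (fun j => ((j <= m)%N)%:R).
  have lam_nC : (lam`_n)%:C = 0 :> R[i] by rewrite lam_n rmorph0.
  rewrite -diag_in_lincomb; apply: eq_diag_in => j.
  rewrite (telescope_gaps (f := fun m => (lam`_m)%:C) lam_nC (ltn_ord j)).
  by apply: eq_bigr => m _; rewrite rmorphB.
have sig_T : \sum_(i < k) (sig`_i)%:C = \sum_(m < n) (gap m)%:C * T m.
  rewrite (big_ord_widen n (fun i => (sig`_i)%:C) k_le_n).
  under eq_bigr do rewrite -u_sig P_gaps mulmx_sumr mulmx_suml mulmx_sumr linear_sumlz.
  rewrite exchange_big; apply: eq_bigr => m _; rewrite mulr_sumr.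
  apply: eq_bigr => i _.
  by rewrite -scalemxAr -scalemxAl -scalemxAr linearZl_LR /= !mulmxA.
have T_le (m : 'I_n) : `|T m| <= (c * (minn m.+1 k)%:R)%:C.
  rewrite rmorphM rmorph_nat mulr_natr.
  by case: leqP => _; [apply: T_le_m | apply: T_le_k].
move/(congr1 (@complex.Re R)): sig_T; rewrite !raddf_sum /= => ->.
rewrite (sum_prefix_gaps lam_n k_le_n) mulr_sumr; apply: ler_sum => m _.
by rewrite Re_realM mulrCA ler_wpM2l // Re_le_norm.
Qed.

End Truncations.

Theorem sum_sing_le_sum_eig (lam sig : seq R) k :
  sorted >=%R lam -> size lam = n -> (forall j, 0 <= lam`_j) ->
  (forall i : 'I_n, 0 <= sig`_i) ->
  let M := Si *m diag_in V (fun j => (lam`_j)%:C) *m S in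
  M^t* *m M = diag_in X (fun i => (sig`_i ^+ 2)%:C) -> (k <= n)%N ->
  \sum_(i < k) sig`_i <= c * \sum_(i < k) lam`_i.
Proof.
move=> lam_sorted size_lam lam_ge0 sig_ge0 M MM k_le_n.
have [u [u_orth u_le1 u_sig]] := left_singular_vectors X_unitary sig_ge0 MM.
exact: sum_sig_le u_sig.
Qed.

End SingularValueBound.

Local Open Scope complex_scope.

Theorem corollary1p3 (R : rcfType) (n : nat) (A Z : 'M[R[i]]_n) (a b : R)
    (sig lam : seq R) :
  psdmx A -> pdmx Z ->
  eigenvalue Z (a%:C) -> eigenvalue Z (b%:C) ->
  (forall c : R[i], eigenvalue Z c -> (b%:C <= c) && (c <= a%:C)) ->
  is_Sing (A *m Z) sig -> is_Eig (A *m Z) lam ->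
  forall k : nat, (k <= n)%N ->
    \sum_(i < k) sig`_i <= (a + b) / (2 * Num.sqrt (a * b)) * \sum_(i < k) lam`_i.
Proof.
move=> A_psd Z_pd Za Zb Z_spec AZ_sing [lam_sorted lam_char] k k_le_n.
have [U U_unitary [d [Z_diag d_in]]] := pdmx_diag_in_bounds Z_pd Z_spec.
have b_gt0 : 0 < b := pdmx_eigenvalue_gt0 Z_pd Zb.
have b_le_a : b <= a by have /andP[] := Z_spec _ Za; rewrite lecR.
have [S [Si [[S_trC Si_trC Si_S SS] [wielandt_S kantorovich_S]]]] :=
  sqrt_wielandt_kantorovich U_unitary b_gt0 b_le_a d_in.
have AZ : A *m Z = Si *m (S *m A *m S) *m S.
  by rewrite Z_diag -SS !mulmxA Si_S mul1mx.
have P_psd : psdmx (S *m A *m S) by rewrite -{1}S_trC; apply: psdmx_congr.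
have P_char : char_poly (S *m A *m S) = \prod_(x <- lam) ('X - (x%:C)%:P).
  by rewrite -lam_char AZ (char_poly_similar _ Si_S).
have [size_lam [V V_unitary P_diag] lam_ge0] := psdmx_diag_in P_psd P_char.
have [X X_unitary [H_diag sig_ge0]] := is_Sing_diag_in AZ_sing.
rewrite AZ P_diag in H_diag.
exact: (sum_sing_le_sum_eig V_unitary X_unitary b_gt0 b_le_a Si_S Si_trC
  wielandt_S kantorovich_S lam_sorted size_lam lam_ge0 sig_ge0 H_diag k_le_n).
Qed.
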